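(* Let $(X,d,\ll,\le,\tau)$ be a locally causally closed and $d$-compatible Lorentzian pre-length space, and let $(\gamma_n)_n$ be a sequence of future-directed causal curves $\gamma_n:[0,L_n]\to X$ parametrized with respect to $d$-arclength, with $L_n:=L^d(\gamma_n)\to\infty$. Suppose that either there is a compact set containing every $\gamma_n([0,L_n])$, or $d$ is proper and $\gamma_n(0)\to x$ for some $x\in X$. Then there exist a subsequence $(\gamma_{n_k})_k$ and a future-directed causal curve $\gamma:[0,\infty)\to X$ such that $\gamma_{n_k}\to\gamma$ locally uniformly (i.e., for every $T>0$, $\gamma_{n_k}|_{[0,T]}\to\gamma|_{[0,T]}$ uniformly, this being defined for all $k$ large). Moreover, $\gamma$ is inextendible, i.e., $\lim_{t\to\infty}\gamma(t)$ does not exist in $X$.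
   Context: A causal space $(X,\ll,\le)$: $\le$ reflexive and transitive, $\ll$ transitive, $x\ll y\Rightarrow x\le y$. A Lorentzian pre-length space $(X,d,\ll,\le,\tau)$ is a causal space with a metric $d$ and $\tau:X\times X\to[0,\infty]$ lower semicontinuous w.r.t. $d$, with $\tau(x,z)\ge\tau(x,y)+\tau(y,z)$ for $x\le y\le z$, $\tau(x,y)=0$ if $x\not\le y$, $\tau(x,y)>0\iff x\ll y$. A future-directed causal curve is a non-constant $d$-locally Lipschitz $\gamma:I\to X$ with $\gamma(t_1)\le\gamma(t_2)$ for $t_1<t_2$; causal curves are future- or past-directed ones. $L^d$ is $d$-arclength; $d$ is proper if closed bounded sets are compact. Locally causally closed: every point has a neighborhood $U$ such that $p_n,q_n\in U$, $p_n\le q_n$, $p_n\to p\in\bar U$, $q_n\to q\in\bar U$ imply $p\le q$. $d$-compatible: every point has a neighborhood $U$ and $C>0$ with $L^d(\gamma)\le C$ for all causal curves $\gamma$ contained in $U$. A future-directed causal curve on $[a,b)$ is inextendible if it admits no extension to a future-directed causal curve including the endpoint; for curves on $[0,\infty)$ this is understood as non-existence of $\lim_{t\to\infty}\gamma(t)$. *)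

From Stdlib Require Import Reals List.
From Coquelicot Require Import Coquelicot.
Open Scope R_scope.

Section LPLS.
Context {X : Type}.

Definition is_metric (d : X -> X -> R) : Prop :=
  (forall x y, 0 <= d x y) /\ (forall x y, d x y = 0 <-> x = y) /\
  (forall x y, d x y = d y x) /\ (forall x y z, d x z <= d x y + d y z).

Definition causal_space (ll le : X -> X -> Prop) : Prop :=
  (forall x, le x x) /\ (forall x y z, le x y -> le y z -> le x z) /\
  (forall x y z, ll x y -> ll y z -> ll x z) /\ (forall x y, ll x y -> le x y).

Definition tau_lsc (d : X -> X -> R) (tau : X -> X -> Rbar) : Prop :=
  forall x y (r : R), Rbar_lt r (tau x y) ->
    exists delta, 0 < delta /\ forall x' y', d x x' < delta -> d y y' < delta ->
      Rbar_lt r (tau x' y').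

Definition is_LPLS (d : X -> X -> R) (ll le : X -> X -> Prop) (tau : X -> X -> Rbar) : Prop :=
  is_metric d /\ causal_space ll le /\ tau_lsc d tau /\
  (forall x y, Rbar_le (Finite 0) (tau x y)) /\
  (forall x y z, le x y -> le y z -> Rbar_le (Rbar_plus (tau x y) (tau y z)) (tau x z)) /\
  (forall x y, ~ le x y -> tau x y = Finite 0) /\
  (forall x y, Rbar_lt (Finite 0) (tau x y) <-> ll x y).

Definition is_interval (I : R -> Prop) : Prop :=
  forall a b c, I a -> I b -> a <= c <= b -> I c.

Definition loc_lipschitz (d : X -> X -> R) (I : R -> Prop) (g : R -> X) : Prop :=
  forall t, I t -> exists delta C, 0 < delta /\
    forall s u, I s -> I u -> Rabs (s - t) < delta -> Rabs (u - t) < delta ->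
      d (g s) (g u) <= C * Rabs (s - u).

Definition future_causal_curve (d : X -> X -> R) (le : X -> X -> Prop)
  (I : R -> Prop) (g : R -> X) : Prop :=
  is_interval I /\ loc_lipschitz d I g /\
  (exists s t, I s /\ I t /\ g s <> g t) /\
  (forall s t, I s -> I t -> s < t -> le (g s) (g t)).

Definition past_causal_curve (d : X -> X -> R) (le : X -> X -> Prop)
  (I : R -> Prop) (g : R -> X) : Prop :=
  is_interval I /\ loc_lipschitz d I g /\
  (exists s t, I s /\ I t /\ g s <> g t) /\
  (forall s t, I s -> I t -> s < t -> le (g t) (g s)).

Definition causal_curve d le I g : Prop :=
  future_causal_curve d le I g \/ past_causal_curve d le I g.

Fixpoint chain_in (I : R -> Prop) (t0 : R) (l : list R) : Prop :=
  match l with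
  | nil => True
  | t1 :: l' => t0 <= t1 /\ I t1 /\ chain_in I t1 l'
  end.

Fixpoint var_sum (d : X -> X -> R) (g : R -> X) (t0 : R) (l : list R) : R :=
  match l with
  | nil => 0
  | t1 :: l' => d (g t0) (g t1) + var_sum d g t1 l'
  end.

Definition curve_length (d : X -> X -> R) (I : R -> Prop) (g : R -> X) : Rbar :=
  Lub_Rbar (fun r => exists t0 l, I t0 /\ chain_in I t0 l /\ r = var_sum d g t0 l).

Definition nbhd (d : X -> X -> R) (x : X) (U : X -> Prop) : Prop :=
  exists r, 0 < r /\ forall y, d x y < r -> U y.

Definition seq_conv (d : X -> X -> R) (p : nat -> X) (x : X) : Prop :=
  forall eps, 0 < eps -> exists N, forall n, (N <= n)%nat -> d (p n) x < eps.

Definition closure (d : X -> X -> R) (U : X -> Prop) (p : X) : Prop :=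
  forall eps, 0 < eps -> exists u, U u /\ d p u < eps.

Definition is_open (d : X -> X -> R) (O : X -> Prop) : Prop :=
  forall x, O x -> nbhd d x O.

Definition is_closed (d : X -> X -> R) (C : X -> Prop) : Prop :=
  forall p, closure d C p -> C p.

Definition is_bounded (d : X -> X -> R) (C : X -> Prop) : Prop :=
  exists x0 r, forall y, C y -> d x0 y <= r.

Definition is_compact (d : X -> X -> R) (K : X -> Prop) : Prop :=
  forall (Idx : Type) (O : Idx -> X -> Prop),
    (forall i, is_open d (O i)) -> (forall x, K x -> exists i, O i x) ->
    exists l : list Idx, forall x, K x -> exists i, In i l /\ O i x.

Definition proper_metric (d : X -> X -> R) : Prop :=
  forall C, is_closed d C -> is_bounded d C -> is_compact d C.

Definition loc_causally_closed (d : X -> X -> R) (le : X -> X -> Prop) : Prop :=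
  forall x, exists U, nbhd d x U /\
    forall (pn qn : nat -> X) (p q : X),
      (forall n, U (pn n) /\ U (qn n) /\ le (pn n) (qn n)) ->
      seq_conv d pn p -> closure d U p ->
      seq_conv d qn q -> closure d U q -> le p q.

Definition d_compatible (d : X -> X -> R) (le : X -> X -> Prop) : Prop :=
  forall x, exists U C, nbhd d x U /\ 0 < C /\
    forall (I : R -> Prop) (g : R -> X), causal_curve d le I g ->
      (forall t, I t -> U (g t)) -> Rbar_le (curve_length d I g) (Finite C).

Definition arclength_param (d : X -> X -> R) (g : R -> X) (L : R) : Prop :=
  forall s t, 0 <= s -> s <= t -> t <= L ->
    curve_length d (fun u => s <= u <= t) g = Finite (t - s).

End LPLS.

(* Arc-length parametrised curves are 1-Lipschitz, so the family is equicontinuous, and the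
   boundedness hypothesis makes it pointwise relatively compact.  A diagonal argument along a
   countable dense grid of times, plus equicontinuity, yields a subsequence converging locally
   uniformly (Arzela-Ascoli) to a 1-Lipschitz limit.  Local causal closedness passes [<=] to the
   limit for nearby parameters, and a supremum argument on [0, oo) makes it global.  If the
   limit had an endpoint p, the approximating curves would, on a late parameter interval longer
   than the d-compatibility bound C at p, be causal curves of length > C staying near p: a
   contradiction.  Nonconstancy of the limit follows from inextendibility. *)

From Stdlib Require Import Reals List Lra Lia Classical ClassicalEpsilon Cantor.
From Coquelicot Require Import Coquelicot.
Open Scope R_scope.

Definition strictly_increasing (r : nat -> nat) : Prop := forall k, (r k < r (S k))%nat.

Lemma strictly_increasing_le r :
  strictly_increasing r -> forall i j, (i <= j)%nat -> (r i <= r j)%nat.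
Proof. intros Hr i j Hij. induction Hij as [|j _ IH]; [lia|]. specialize (Hr j). lia. Qed.

Lemma strictly_increasing_ge_id r : strictly_increasing r -> forall k, (k <= r k)%nat.
Proof. intros Hr k. induction k as [|k IH]; [lia|]. specialize (Hr k). lia. Qed.

Lemma strictly_increasing_comp r s :
  strictly_increasing r -> strictly_increasing s -> strictly_increasing (fun k => r (s k)).
Proof.
  intros Hr Hs k. pose proof (strictly_increasing_le r Hr _ _ (Hs k)).
  specialize (Hr (s k)). lia.
Qed.

Lemma strictly_increasing_shift N : strictly_increasing (fun k => (k + N)%nat).
Proof. intro k. lia. Qed.

Section MetricSpace.
Context {X : Type} (d : X -> X -> R).
Hypothesis Hd : is_metric d.

Lemma metric_self x : d x x = 0.
Proof. destruct Hd as (_ & H & _). now apply H. Qed.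

Lemma metric_sym x y : d x y = d y x.
Proof. destruct Hd as (_ & _ & H & _). apply H. Qed.

Lemma metric_triangle x y z : d x z <= d x y + d y z.
Proof. destruct Hd as (_ & _ & _ & H). apply H. Qed.

Definition cauchy_seq (a : nat -> X) : Prop :=
  forall eps, 0 < eps -> exists N, forall i j, (N <= i)%nat -> (N <= j)%nat -> d (a i) (a j) < eps.

Definition cluster_point (a : nat -> X) (p : X) : Prop :=
  forall eps, 0 < eps -> forall N, exists k, (N <= k)%nat /\ d (a k) p < eps.

Lemma seq_conv_cauchy a p : seq_conv d a p -> cauchy_seq a.
Proof.
  intros Ha eps Heps. destruct (Ha (eps / 2)) as [N HN]; [lra|].
  exists N. intros i j Hi Hj. specialize (HN i Hi) as Hpi. specialize (HN j Hj) as Hpj.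
  pose proof (metric_triangle (a i) p (a j)). rewrite (metric_sym p) in *. lra.
Qed.

Lemma seq_conv_subseq a r p :
  strictly_increasing r -> seq_conv d a p -> seq_conv d (fun k => a (r k)) p.
Proof.
  intros Hr Ha eps Heps. destruct (Ha eps Heps) as [N HN]. exists N. intros k Hk.
  apply HN. pose proof (strictly_increasing_ge_id r Hr k). lia.
Qed.

Lemma cauchy_seq_conv_of_subseq a r p :
  strictly_increasing r -> cauchy_seq a -> seq_conv d (fun k => a (r k)) p -> seq_conv d a p.
Proof.
  intros Hr Ha Hsub eps Heps.
  destruct (Ha (eps / 2)) as [N HN]; [lra|]. destruct (Hsub (eps / 2)) as [M HM]; [lra|].
  exists N. intros n Hn. set (k := Nat.max N M).
  pose proof (strictly_increasing_ge_id r Hr k).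
  specialize (HN n (r k) Hn ltac:(lia)). specialize (HM k ltac:(lia)).
  pose proof (metric_triangle (a n) (a (r k)) p). lra.
Qed.

Lemma cauchy_seq_finite_uniform (a : nat -> nat -> X) c eps :
  0 < eps -> (forall i, (i < c)%nat -> cauchy_seq (a i)) ->
  exists N, forall i, (i < c)%nat ->
    forall j k, (N <= j)%nat -> (N <= k)%nat -> d (a i j) (a i k) < eps.
Proof.
  intros Heps. induction c as [|c IH]; intros Ha.
  - exists O. intros i Hi. lia.
  - destruct IH as [N1 HN1]; [intros i Hi; apply Ha; lia|].
    destruct (Ha c ltac:(lia) eps Heps) as [N2 HN2].
    exists (Nat.max N1 N2). intros i Hi j k Hj Hk.
    destruct (Nat.eq_dec i c) as [->|Hne]; [apply HN2 | apply HN1]; lia.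
Qed.

Lemma list_bounded {A} (f : A -> nat) (l : list A) :
  exists M, forall i, In i l -> (f i <= M)%nat.
Proof.
  induction l as [|x l [M HM]]; [exists O; intros i []|].
  exists (Nat.max (f x) M). intros i [<-|Hi]; [|specialize (HM i Hi)]; lia.
Qed.

Lemma compact_cluster_point K a :
  is_compact d K -> (forall k, K (a k)) -> exists p, cluster_point a p.
Proof.
  intros HK Ha. apply NNPP. intro Hnone.
  (* Every point of K has a ball that the sequence eventually avoids. *)
  set (O := fun (i : X * R * nat) y => let '(p, e, N) := i in
     0 < e /\ (forall k, (N <= k)%nat -> e <= d (a k) p) /\ d p y < e / 2).
  destruct (HK _ O) as [l Hl].
  - intros [[p e] N] y (He & HN & Hy). exists (e / 2 - d p y). split; [lra|].
    intros z Hz. repeat split; auto. pose proof (metric_triangle p y z). lra.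
  - intros x _. assert (Hx : ~ cluster_point a x) by (intro; apply Hnone; eauto).
    apply not_all_ex_not in Hx as [e He]. apply imply_to_and in He as [He Hfar].
    apply not_all_ex_not in Hfar as [N HN]. exists (x, e, N). repeat split; auto.
    + intros k Hk. apply Rnot_lt_le. intro Hlt. apply HN. eauto.
    + rewrite metric_self. lra.
  - destruct (list_bounded (fun i : X * R * nat => snd i) l) as [M HM].
    destruct (Hl (a M) (Ha M)) as [[[p e] N] [Hi (He & HN & Hy)]].
    specialize (HM _ Hi). simpl in HM. specialize (HN M HM). rewrite metric_sym in HN. lra.
Qed.

Lemma cluster_point_subseq a p :
  cluster_point a p -> exists r, strictly_increasing r /\ seq_conv d (fun k => a (r k)) p.
Proof.
  intros Hp.
  destruct (choice (fun (mN : nat * nat) k =>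
      (snd mN <= k)%nat /\ d (a k) p < / INR (S (fst mN)))) as [f Hf].
  { intros [m N]. apply Hp. apply Rinv_0_lt_compat, lt_0_INR. lia. }
  set (r := fix r n := match n with O => f (O, O) | S m => f (S m, S (r m)) end).
  assert (Hr : forall n, d (a (r n)) p < / INR (S n)) by (intros [|n]; apply Hf).
  exists r. split.
  - intro k. apply (Hf (S k, S (r k))).
  - intros eps Heps. destruct (archimed_cor1 eps Heps) as [N [HN HNpos]].
    exists N. intros n Hn. eapply Rlt_le_trans; [apply Hr|].
    eapply Rle_trans; [|apply Rlt_le, HN].
    apply Rinv_le_contravar; [apply lt_0_INR; lia | apply le_INR; lia].
Qed.

Lemma compact_seq_subseq K a :
  is_compact d K -> (forall k, K (a k)) ->
  exists r p, strictly_increasing r /\ seq_conv d (fun k => a (r k)) p.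
Proof.
  intros HK Ha. destruct (compact_cluster_point K a HK Ha) as [p Hp].
  destruct (cluster_point_subseq a p Hp) as [r Hr]. eauto.
Qed.

Lemma closed_ball_closed x r : is_closed d (fun y => d x y <= r).
Proof.
  intros p Hp. apply le_epsilon. intros e He. destruct (Hp e He) as [u [Hu Hpu]].
  pose proof (metric_triangle x u p). rewrite (metric_sym u p) in *. lra.
Qed.

End MetricSpace.

Fixpoint nested_subseq (refine : nat -> (nat -> nat) -> nat -> nat) (m : nat) : nat -> nat :=
  match m with
  | O => refine O (fun k => k)
  | S m' => fun k => nested_subseq refine m' (refine m (nested_subseq refine m') k)
  end.

Section Diagonal.
Context {X : Type} (d : X -> X -> R).

Lemma diagonal_subseq (f : nat -> nat -> X) :
  (forall j psi, strictly_increasing psi ->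
     exists rho, strictly_increasing rho /\ cauchy_seq d (fun k => f j (psi (rho k)))) ->
  exists phi, strictly_increasing phi /\ forall j, cauchy_seq d (fun k => f j (phi k)).
Proof.
  intros Hext.
  destruct (choice (fun (jpsi : nat * (nat -> nat)) rho => strictly_increasing (snd jpsi) ->
      strictly_increasing rho /\ cauchy_seq d (fun k => f (fst jpsi) (snd jpsi (rho k)))))
    as [rf Hrf].
  { intros [j psi]. destruct (classic (strictly_increasing psi)) as [Hpsi|Hpsi].
    - destruct (Hext j psi Hpsi) as [rho Hrho]. eauto.
    - exists (fun k => k). intro. contradiction. }
  set (Sub := nested_subseq (fun j psi => rf (j, psi))).
  assert (Hid : strictly_increasing (fun k => k)) by (intro; lia).
  assert (Hinc : forall m, strictly_increasing (Sub m)).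
  { induction m as [|m IH]; [apply (Hrf (O, _) Hid)|].
    change (strictly_increasing (fun k => Sub m (rf (S m, Sub m) k))).
    apply strictly_increasing_comp; [exact IH | apply (Hrf (S m, _) IH)]. }
  assert (Hcau : forall m, cauchy_seq d (fun k => f m (Sub m k))).
  { intros [|m]; [apply (Hrf (O, _) Hid) | apply (Hrf (S m, _) (Hinc m))]. }
  assert (Htail : forall j m i, exists i', (i <= i')%nat /\ Sub (j + m)%nat i = Sub m i').
  { induction j as [|j IH]; intros m i; [exists i; auto|].
    destruct (IH m (rf (S (j + m), Sub (j + m)%nat) i)) as [i' [Hi' Heq]].
    exists i'. split; [|exact Heq].
    pose proof (strictly_increasing_ge_id _ (proj1 (Hrf (S (j + m), _) (Hinc (j + m)%nat))) i).
    lia. }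
  exists (fun k => Sub k k). split.
  - intro k. change (Sub (S k) (S k)) with (Sub k (rf (S k, Sub k) (S k))).
    pose proof (strictly_increasing_ge_id _ (proj1 (Hrf (S k, _) (Hinc k))) (S k)) as Hge.
    pose proof (strictly_increasing_le _ (Hinc k) _ _ Hge). specialize (Hinc k k). lia.
  - intros m eps Heps. destruct (Hcau m eps Heps) as [N HN]. exists (N + m)%nat.
    assert (Hdiag : forall k, (m <= k)%nat -> exists i', (k <= i')%nat /\ Sub k k = Sub m i').
    { intros k Hk. destruct (Htail (k - m)%nat m k) as [i' Hi'].
      replace (k - m + m)%nat with k in Hi' by lia. eauto. }
    intros a b Ha Hb.
    destruct (Hdiag a ltac:(lia)) as [ia [Hia ->]]. destruct (Hdiag b ltac:(lia)) as [ib [Hib ->]].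
    apply HN; lia.
Qed.

End Diagonal.

Lemma local_preorder_global (Q : R -> R -> Prop) :
  (forall x, Q x x) -> (forall x y z, Q x y -> Q y z -> Q x z) ->
  (forall u, 0 <= u -> exists delta, 0 < delta /\ forall a b, 0 <= a -> a < b ->
      Rabs (a - u) <= delta -> Rabs (b - u) <= delta -> Q a b) ->
  forall s t, 0 <= s -> s < t -> Q s t.
Proof.
  intros Qrefl Qtrans Hloc s t Hs Hst.
  (* [c] is the supremum of the points of [s, t] related to [s]; the local property at [c]
     reaches past it unless [c = t]. *)
  set (E := fun u => s <= u <= t /\ Q s u).
  destruct (completeness E) as [c [Hub Hlub]].
  { exists t. intros u [Hu _]. lra. }
  { exists s. split; [lra | auto]. }
  assert (Hsc : s <= c) by (apply Hub; split; [lra | auto]).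
  assert (Hct : c <= t) by (apply Hlub; intros u [Hu _]; lra).
  destruct (Hloc c ltac:(lra)) as [delta [Hdelta Hnear]].
  assert (Hu : exists u, E u /\ c - delta < u).
  { apply NNPP. intro Hn. assert (c <= c - delta); [|lra].
    apply Hlub. intros u Hu. apply Rnot_lt_le. intro Hlt. apply Hn. eauto. }
  destruct Hu as [u [[Hu HQu] Hcu]]. assert (u <= c) by (apply Hub; split; auto).
  assert (Hright : forall b, u <= b -> b <= c + delta -> b <= t -> Q s b).
  { intros b Hub' Hbc Hbt. destruct (Req_dec u b) as [<-|Hne]; [exact HQu|].
    apply Qtrans with u; auto. apply Hnear; try lra; apply Rabs_le; lra. }
  destruct (Req_dec c t) as [<-|Hne]; [apply Hright; lra|].
  set (b := Rmin (c + delta / 2) t).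
  assert (c < b) by (apply Rmin_glb_lt; lra).
  assert (b <= c); [|lra].
  pose proof (Rmin_l (c + delta / 2) t) as Hb1. pose proof (Rmin_r (c + delta / 2) t) as Hb2.
  fold b in Hb1, Hb2. apply Hub. split; [lra|]. apply Hright; lra.
Qed.

Section Arclength.
Context {X : Type} (d : X -> X -> R) (le : X -> X -> Prop).
Hypothesis Hd : is_metric d.

Lemma arclength_param_dist_le g Lg s t :
  arclength_param d g Lg -> 0 <= s -> s <= t -> t <= Lg -> d (g s) (g t) <= t - s.
Proof.
  intros Harc Hs Hst Ht. specialize (Harc s t Hs Hst Ht). unfold curve_length in Harc.
  match type of Harc with Lub_Rbar ?E = _ => destruct (Lub_Rbar_correct E) as [Hub _] end.
  rewrite Harc in Hub. apply (Hub (d (g s) (g t))).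
  exists s, (t :: nil). simpl. repeat split; lra.
Qed.

Lemma arclength_param_lipschitz g Lg s t :
  arclength_param d g Lg -> 0 <= s <= Lg -> 0 <= t <= Lg -> d (g s) (g t) <= Rabs (s - t).
Proof.
  intros Harc Hs Ht. destruct (Rle_or_lt s t).
  - rewrite Rabs_left1 by lra.
    pose proof (arclength_param_dist_le g Lg s t Harc ltac:(lra) ltac:(lra) ltac:(lra)). lra.
  - rewrite Rabs_right by lra. rewrite (metric_sym d Hd).
    pose proof (arclength_param_dist_le g Lg t s Harc ltac:(lra) ltac:(lra) ltac:(lra)). lra.
Qed.

Lemma var_sum_const I g x l t0 :
  (forall u, I u -> g u = x) -> I t0 -> chain_in I t0 l -> var_sum d g t0 l = 0.
Proof.
  intros Hx. revert t0. induction l as [|t1 l IH]; intros t0 Ht0 Hl; [reflexivity|].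
  destruct Hl as (_ & Ht1 & Hl). simpl.
  rewrite (IH t1 Ht1 Hl), (Hx t0 Ht0), (Hx t1 Ht1), (metric_self d Hd). ring.
Qed.

Lemma curve_length_pos_nonconstant I g c t0 :
  curve_length d I g = Finite c -> 0 < c -> I t0 -> exists s t, I s /\ I t /\ g s <> g t.
Proof.
  intros Hlen Hc Ht0. apply NNPP. intro Hconst.
  assert (Hx : forall u, I u -> g u = g t0).
  { intros u Hu. apply NNPP. intro Hne. apply Hconst. eauto. }
  unfold curve_length in Hlen.
  match type of Hlen with Lub_Rbar ?E = _ => destruct (Lub_Rbar_correct E) as [_ Hlub] end.
  rewrite Hlen in Hlub. enough (Rbar_le c 0) by (simpl in *; lra).
  apply Hlub. intros r (t1 & l & Ht1 & Hl & ->).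
  rewrite (var_sum_const I g (g t0) l t1 Hx Ht1 Hl). simpl. lra.
Qed.

Lemma lipschitz_loc_lipschitz I g :
  (forall s t, I s -> I t -> d (g s) (g t) <= Rabs (s - t)) -> loc_lipschitz d I g.
Proof.
  intros Hlip t _. exists 1, 1. split; [lra|].
  intros s u Hs Hu _ _. rewrite Rmult_1_l. auto.
Qed.

Lemma arclength_subcurve_future_causal g Lg a b :
  future_causal_curve d le (fun t => 0 <= t <= Lg) g -> arclength_param d g Lg ->
  0 <= a < b -> b <= Lg -> future_causal_curve d le (fun t => a <= t <= b) g.
Proof.
  intros (_ & _ & _ & Hmono) Harc Hab Hb. split; [|split; [|split]].
  - intros x y z Hx Hy Hz. lra.
  - apply lipschitz_loc_lipschitz. intros s t Hs Ht.
    apply (arclength_param_lipschitz g Lg); auto; lra.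
  - apply (curve_length_pos_nonconstant _ g (b - a) a); [apply Harc | ..]; lra.
  - intros s t Hs Ht Hst. apply Hmono; lra.
Qed.

End Arclength.

(* Enumerates, via Cantor pairing, all points [i / (m + 1)] of all grids of mesh [1 / (m + 1)]. *)
Definition grid_point (j : nat) : R := let (i, m) := Cantor.of_nat j in INR i / INR (S m).

Lemma grid_point_to_nat i m : grid_point (Cantor.to_nat (i, m)) = INR i / INR (S m).
Proof. unfold grid_point. now rewrite Cantor.cancel_of_to. Qed.

Lemma grid_point_nonneg j : 0 <= grid_point j.
Proof.
  unfold grid_point. destruct (Cantor.of_nat j) as [i m].
  apply Rle_mult_inv_pos; [apply pos_INR | apply lt_0_INR; lia].
Qed.

Section LimitCurve.
Context {X : Type} (d : X -> X -> R) (le : X -> X -> Prop) (gam : nat -> R -> X) (L : nat -> R).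
Hypothesis Hd : is_metric d.
Hypothesis Harc : forall n, arclength_param d (gam n) (L n).
Hypothesis Hinf : forall M, exists N, forall n, (N <= n)%nat -> M <= L n.

Lemma gam_lipschitz n s t :
  0 <= s <= L n -> 0 <= t <= L n -> d (gam n s) (gam n t) <= Rabs (s - t).
Proof. apply (arclength_param_lipschitz d Hd), Harc. Qed.

Lemma subseq_length_ge phi T :
  strictly_increasing phi -> exists N, forall k, (N <= k)%nat -> T <= L (phi k).
Proof.
  intros Hphi. destruct (Hinf T) as [N HN]. exists N. intros k Hk. apply HN.
  pose proof (strictly_increasing_ge_id phi Hphi k). lia.
Qed.

Definition pointwise_subseq_convergent : Prop :=
  forall t psi, 0 <= t -> strictly_increasing psi ->
    exists rho p, strictly_increasing rho /\ seq_conv d (fun k => gam (psi (rho k)) t) p.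

Lemma pointwise_subseq_convergent_of_bounds :
  (exists K, is_compact d K /\ forall n t, 0 <= t <= L n -> K (gam n t))
  \/ (proper_metric d /\ exists x, seq_conv d (fun n => gam n 0) x) ->
  pointwise_subseq_convergent.
Proof.
  intros Hbd t psi Ht Hpsi.
  enough (HK : exists K N, is_compact d K /\ forall k, K (gam (psi (k + N)%nat) t)).
  { destruct HK as (K & N & HK & HKin).
    destruct (compact_seq_subseq d Hd K _ HK HKin) as (r & p & Hr & Hp).
    exists (fun k => (r k + N)%nat), p. split; [intro k; specialize (Hr k); lia | exact Hp]. }
  destruct (subseq_length_ge psi t Hpsi) as [N1 HN1].
  destruct Hbd as [(K & HK & HKin) | (Hproper & x & Hx)].
  - exists K, N1. split; [exact HK|]. intro k. apply HKin. split; [exact Ht | apply HN1; lia].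
  - destruct (Hx 1 ltac:(lra)) as [N2 HN2].
    exists (fun y => d x y <= t + 1), (N1 + N2)%nat. split.
    + apply Hproper; [apply closed_ball_closed, Hd | exists x, (t + 1); auto].
    + intro k. set (n := psi (k + (N1 + N2))%nat).
      assert (HLn : t <= L n) by (apply HN1; lia).
      assert (Hn0 : d (gam n 0) x < 1).
      { apply HN2. pose proof (strictly_increasing_ge_id psi Hpsi (k + (N1 + N2))). unfold n. lia. }
      pose proof (gam_lipschitz n 0 t ltac:(lra) ltac:(lra)) as H0t.
      rewrite Rabs_left1 in H0t by lra.
      pose proof (metric_triangle d Hd x (gam n 0) (gam n t)).
      rewrite (metric_sym d Hd x (gam n 0)) in *. lra.
Qed.

Definition uniformly_cauchy_on_bounded (phi : nat -> nat) : Prop :=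
  forall T eps, 0 < eps -> exists N, forall a b, (N <= a)%nat -> (N <= b)%nat ->
    forall t, 0 <= t <= T -> d (gam (phi a) t) (gam (phi b) t) < eps.

Lemma grid_cauchy_uniformly_cauchy phi :
  strictly_increasing phi -> (forall j, cauchy_seq d (fun k => gam (phi k) (grid_point j))) ->
  uniformly_cauchy_on_bounded phi.
Proof.
  intros Hphi Hgrid T eps Heps.
  (* Compare at the grid point [q] just below [t]: the mesh [1 / h] is below [eps / 3] and the
     curves are 1-Lipschitz. *)
  destruct (archimed_cor1 (eps / 3)) as [[|m] [Hm Hmpos]]; [lra | lia |].
  set (h := INR (S m)) in Hm.
  assert (Hh : 0 < h) by (apply lt_0_INR; lia).
  destruct (nfloor_ex (Rmax 0 (T * h)) (Rmax_l _ _)) as [c Hc].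
  destruct (cauchy_seq_finite_uniform d (fun i k => gam (phi k) (INR i / h)) (S c) (eps / 3))
    as [N1 HN1]; [lra | intros i _; unfold h; rewrite <- grid_point_to_nat; apply Hgrid |].
  destruct (subseq_length_ge phi T Hphi) as [N2 HN2].
  exists (Nat.max N1 N2). intros a b Ha Hb t Ht.
  destruct (nfloor_ex (t * h)) as [i Hi]; [nra|].
  set (q := INR i / h).
  assert (Hqh : q * h = INR i) by (unfold q; field; lra).
  assert (Hq0 : 0 <= q) by (apply Rle_mult_inv_pos; [apply pos_INR | exact Hh]).
  assert (Hqt : q <= t) by nra.
  assert (Hgap : t - q < / h).
  { apply (Rmult_lt_reg_r h); [exact Hh|]. rewrite Rinv_l by lra. nra. }
  assert (Hic : (i < S c)%nat).
  { apply INR_lt. rewrite S_INR. pose proof (Rmax_r 0 (T * h)). nra. }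
  specialize (HN1 i Hic a b ltac:(lia) ltac:(lia)). simpl in HN1. fold q in HN1.
  assert (HLa : T <= L (phi a)) by (apply HN2; lia).
  assert (HLb : T <= L (phi b)) by (apply HN2; lia).
  pose proof (gam_lipschitz (phi a) t q ltac:(lra) ltac:(lra)) as Hla.
  pose proof (gam_lipschitz (phi b) q t ltac:(lra) ltac:(lra)) as Hlb.
  rewrite Rabs_right in Hla by lra. rewrite Rabs_left1 in Hlb by lra.
  pose proof (metric_triangle d Hd (gam (phi a) t) (gam (phi a) q) (gam (phi b) t)).
  pose proof (metric_triangle d Hd (gam (phi a) q) (gam (phi b) q) (gam (phi b) t)).
  lra.
Qed.

Lemma uniformly_cauchy_subseq :
  pointwise_subseq_convergent ->
  exists phi, strictly_increasing phi /\ uniformly_cauchy_on_bounded phi.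
Proof.
  intros Hpw.
  destruct (diagonal_subseq d (fun j n => gam n (grid_point j))) as [phi [Hphi Hcau]].
  { intros j psi Hpsi.
    destruct (Hpw (grid_point j) psi (grid_point_nonneg j) Hpsi) as (rho & p & Hrho & Hp).
    exists rho. split; [exact Hrho | exact (seq_conv_cauchy d Hd _ _ Hp)]. }
  exists phi. split; [exact Hphi | now apply grid_cauchy_uniformly_cauchy].
Qed.

Lemma uniformly_cauchy_pointwise_limit phi :
  pointwise_subseq_convergent -> strictly_increasing phi -> uniformly_cauchy_on_bounded phi ->
  exists g : R -> X, forall t, 0 <= t -> seq_conv d (fun k => gam (phi k) t) (g t).
Proof.
  intros Hpw Hphi Hunif.
  apply (choice (fun t y => 0 <= t -> seq_conv d (fun k => gam (phi k) t) y)).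
  intros t. destruct (Rle_lt_dec 0 t) as [Ht|Ht]; [|exists (gam O 0); intro; lra].
  destruct (Hpw t phi Ht Hphi) as (r & p & Hr & Hp). exists p. intros _.
  apply (cauchy_seq_conv_of_subseq d Hd _ r p Hr); [|exact Hp].
  intros eps Heps. destruct (Hunif t eps Heps) as [N HN].
  exists N. intros i j Hi Hj. apply HN; auto; lra.
Qed.

Section Limit.
Variables (phi : nat -> nat) (g : R -> X).
Hypothesis Hphi : strictly_increasing phi.
Hypothesis Hunif : uniformly_cauchy_on_bounded phi.
Hypothesis Hg : forall t, 0 <= t -> seq_conv d (fun k => gam (phi k) t) (g t).

Lemma limit_locally_uniform T eps :
  0 < eps -> exists N, forall k, (N <= k)%nat ->
    T <= L (phi k) /\ forall t, 0 <= t <= T -> d (gam (phi k) t) (g t) < eps.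
Proof.
  intros Heps. destruct (Hunif T (eps / 2)) as [N1 HN1]; [lra|].
  destruct (subseq_length_ge phi T Hphi) as [N2 HN2].
  exists (Nat.max N1 N2). intros k Hk. split; [apply HN2; lia|]. intros t Ht.
  destruct (Hg t ltac:(lra) (eps / 2)) as [N3 HN3]; [lra|].
  set (m := Nat.max N1 N3). specialize (HN3 m ltac:(lia)).
  specialize (HN1 k m ltac:(lia) ltac:(lia) t Ht).
  pose proof (metric_triangle d Hd (gam (phi k) t) (gam (phi m) t) (g t)). lra.
Qed.

Lemma limit_lipschitz s t : 0 <= s -> 0 <= t -> d (g s) (g t) <= Rabs (s - t).
Proof.
  intros Hs Ht. apply le_epsilon. intros e He.
  destruct (Hg s Hs (e / 2)) as [N1 HN1]; [lra|].
  destruct (Hg t Ht (e / 2)) as [N2 HN2]; [lra|].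
  destruct (subseq_length_ge phi (Rmax s t) Hphi) as [N3 HN3].
  set (k := Nat.max N1 (Nat.max N2 N3)).
  specialize (HN1 k ltac:(lia)). specialize (HN2 k ltac:(lia)). specialize (HN3 k ltac:(lia)).
  pose proof (Rmax_l s t). pose proof (Rmax_r s t).
  pose proof (gam_lipschitz (phi k) s t ltac:(lra) ltac:(lra)).
  pose proof (metric_triangle d Hd (g s) (gam (phi k) s) (g t)).
  pose proof (metric_triangle d Hd (gam (phi k) s) (gam (phi k) t) (g t)).
  rewrite (metric_sym d Hd (gam (phi k) s) (g s)) in HN1. lra.
Qed.

Hypothesis Hcurve : forall n, future_causal_curve d le (fun t => 0 <= t <= L n) (gam n).
Hypothesis Hlcc : loc_causally_closed d le.

Lemma limit_locally_causal u :
  0 <= u -> exists delta, 0 < delta /\ forall a b, 0 <= a -> a < b ->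
    Rabs (a - u) <= delta -> Rabs (b - u) <= delta -> le (g a) (g b).
Proof.
  intros Hu. destruct (Hlcc (g u)) as (U & (r & Hr & HU) & Hclosed).
  exists (r / 3). split; [lra|]. intros a b Ha Hab Hau Hbu.
  pose proof (limit_lipschitz u a Hu Ha) as Hga.
  pose proof (limit_lipschitz u b Hu ltac:(lra)) as Hgb.
  rewrite Rabs_minus_sym in Hga, Hgb.
  destruct (Hg a Ha (r / 3)) as [N1 HN1]; [lra|].
  destruct (Hg b ltac:(lra) (r / 3)) as [N2 HN2]; [lra|].
  destruct (subseq_length_ge phi b Hphi) as [N3 HN3].
  set (N := Nat.max N1 (Nat.max N2 N3)).
  assert (Hnear : forall x y, d (g u) x <= r / 3 -> d y x < r / 3 -> U y).
  { intros x y Hx Hy. apply HU. pose proof (metric_triangle d Hd (g u) x y).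
    rewrite (metric_sym d Hd x y) in *. lra. }
  assert (Hself : forall x, d (g u) x <= r / 3 -> closure d U x).
  { intros x Hx e He. exists x. rewrite (metric_self d Hd). split; [apply HU; lra | exact He]. }
  apply (Hclosed (fun k => gam (phi (k + N)%nat) a) (fun k => gam (phi (k + N)%nat) b)).
  - intro k. split; [|split].
    + apply (Hnear (g a)); [lra | apply HN1; lia].
    + apply (Hnear (g b)); [lra | apply HN2; lia].
    + destruct (Hcurve (phi (k + N)%nat)) as (_ & _ & _ & Hmono).
      assert (b <= L (phi (k + N)%nat)) by (apply HN3; lia). apply Hmono; lra.
  - apply (seq_conv_subseq d (fun k => gam (phi k) a)); [apply strictly_increasing_shift | auto].
  - apply Hself. lra.
  - apply (seq_conv_subseq d (fun k => gam (phi k) b));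
      [apply strictly_increasing_shift | apply Hg; lra].
  - apply Hself. lra.
Qed.

Hypothesis Hle_refl : forall x, le x x.
Hypothesis Hle_trans : forall x y z, le x y -> le y z -> le x z.

Lemma limit_causal s t : 0 <= s -> s < t -> le (g s) (g t).
Proof.
  apply (local_preorder_global (fun a b => le (g a) (g b))).
  - intro; apply Hle_refl.
  - intros x y z; apply Hle_trans.
  - exact limit_locally_causal.
Qed.

Hypothesis Hcomp : d_compatible d le.

Lemma limit_inextendible :
  ~ (exists p, forall eps, 0 < eps -> exists M, forall t, M <= t -> d (g t) p < eps).
Proof.
  intros [p Hp]. destruct (Hcomp p) as (U & C & (r & Hr & HU) & HC & Hbound).
  destruct (Hp (r / 2)) as [M HM]; [lra|].
  (* Past [a] the approximating curves stay near [p], yet have length [b - a > C] there. *)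
  set (a := Rmax M 0). set (b := a + C + 1). assert (Hb : b = a + C + 1) by reflexivity.
  pose proof (Rmax_l M 0) as HMa. pose proof (Rmax_r M 0) as Ha0. fold a in HMa, Ha0.
  destruct (limit_locally_uniform b (r / 2)) as [N HN]; [lra|].
  destruct (HN N (Nat.le_refl N)) as [HLb Hclose].
  specialize (Hbound (fun u => a <= u <= b) (gam (phi N))).
  rewrite (Harc (phi N) a b) in Hbound by lra.
  enough (b - a <= C) by lra.
  apply Hbound.
  - left. apply (arclength_subcurve_future_causal d le Hd _ (L (phi N))); auto; lra.
  - intros t Ht. apply HU. specialize (Hclose t ltac:(lra)). specialize (HM t ltac:(lra)).
    pose proof (metric_triangle d Hd p (g t) (gam (phi N) t)).
    rewrite (metric_sym d Hd p), (metric_sym d Hd (g t)) in *. lra.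
Qed.

Lemma limit_future_causal_curve : future_causal_curve d le (fun t => 0 <= t) g.
Proof.
  split; [|split; [|split]].
  - intros x y z Hx Hy Hz. lra.
  - apply lipschitz_loc_lipschitz. intros s t Hs Ht. now apply limit_lipschitz.
  - apply NNPP. intro Hconst. apply limit_inextendible. exists (g 0). intros eps Heps.
    exists 0. intros t Ht.
    assert (Hgt : g t = g 0).
    { apply NNPP. intro Hne. apply Hconst. exists t, 0. split; [lra | split; [lra | exact Hne]]. }
    now rewrite Hgt, (metric_self d Hd).
  - intros s t Hs _ Hst. now apply limit_causal.
Qed.

End Limit.
End LimitCurve.

Theorem theorem3p14 (X : Type) (d : X -> X -> R) (ll le : X -> X -> Prop)
  (tau : X -> X -> Rbar)
  (HX : is_LPLS d ll le tau)
  (Hlcc : loc_causally_closed d le)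
  (Hcomp : d_compatible d le)
  (gam : nat -> R -> X) (L : nat -> R)
  (Hcurve : forall n, future_causal_curve d le (fun t => 0 <= t <= L n) (gam n))
  (Hlen : forall n, curve_length d (fun t => 0 <= t <= L n) (gam n) = Finite (L n))
  (Harc : forall n, arclength_param d (gam n) (L n))
  (Hinf : forall M, exists N, forall n, (N <= n)%nat -> M <= L n)
  (Hbd : (exists K, is_compact d K /\
            forall n t, 0 <= t <= L n -> K (gam n t))
         \/ (proper_metric d /\ exists x, seq_conv d (fun n => gam n 0) x)) :
  exists (phi : nat -> nat) (g : R -> X),
    (forall k, (phi k < phi (S k))%nat) /\
    future_causal_curve d le (fun t => 0 <= t) g /\
    (forall T, 0 < T -> forall eps, 0 < eps -> exists N, forall k, (N <= k)%nat ->
       T <= L (phi k) /\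
       forall t, 0 <= t <= T -> d (gam (phi k) t) (g t) < eps) /\
    ~ (exists p, forall eps, 0 < eps -> exists M, forall t, M <= t -> d (g t) p < eps).
Proof.
  (* [Hlen] is the instance [s = 0, t = L n] of [Harc]; only the metric and the preorder [le]
     of the Lorentzian structure are needed. *)
  destruct HX as (Hd & (Hle_refl & Hle_trans & _) & _).
  pose proof (pointwise_subseq_convergent_of_bounds d gam L Hd Harc Hinf Hbd) as Hpw.
  destruct (uniformly_cauchy_subseq d gam L Hd Harc Hinf Hpw) as (phi & Hphi & Hunif).
  destruct (uniformly_cauchy_pointwise_limit d gam Hd phi Hpw Hphi Hunif) as [g Hg].
  exists phi, g. split; [exact Hphi|]. split; [|split].
  - eapply (limit_future_causal_curve d le gam L); eassumption.
  - intros T _. eapply (limit_locally_uniform d gam L); eassumption.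
  - eapply (limit_inextendible d le gam L); eassumption.
Qed.
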